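(* Let $\mathcal{H}$ be a $k$-uniform hypergraph with vertex degrees $d_i$, and for each vertex $i$ let \[ m_{i}=\frac{\sum_{\{i,i_{2},\cdots,i_{k}\}\in E(\mathcal{H})}d_{i_{2}}\cdots d_{i_{k}}}{d_{i}^{k-1}}. \] Then \[ \rho(\mathcal{Q}(\mathcal{H}))\leq\max_{e\in E(\mathcal{H})}\max_{\{i,j\}\subseteq e}\frac{d_{i}+d_{j}+\sqrt{(d_{i}-d_{j})^{2}+4m_{i}m_{j}}}{2}. \]
   Context: A $k$-uniform hypergraph $\mathcal{H}$ on vertex set $[n]$ has edges that are $k$-element subsets of $[n]$; $d_i$ is the number of edges containing vertex $i$. The sum over $\{i,i_2,\dots,i_k\}\in E(\mathcal{H})$ runs over the edges containing $i$, with $i_2,\dots,i_k$ the other vertices of that edge. The adjacency tensor $\mathcal{A}(\mathcal{H})$ has entries $\mathcal{A}_{i_1\cdots i_k}=\frac{1}{(k-1)!}$ if $\{i_1,\dots,i_k\}\in E(\mathcal{H})$ and $0$ otherwise; $\mathcal{D}(\mathcal{H})$ is the diagonal tensor with $\mathcal{D}_{i\cdots i}=d_i$; $\mathcal{Q}(\mathcal{H})=\mathcal{D}(\mathcal{H})+\mathcal{A}(\mathcal{H})$ is the signless Laplacian tensor. For a tensor $\mathcal{T}$ and $x\in\mathbb{C}^n$, $(\mathcal{T}x)_i=\sum_{i_2,\dots,i_k}\mathcal{T}_{ii_2\cdots i_k}x_{i_2}\cdots x_{i_k}$; $\lambda$ is an eigenvalue if $\mathcal{T}x=\lambda x^{[k-1]}$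 for some nonzero $x$, where $x^{[k-1]}=(x_1^{k-1},\dots,x_n^{k-1})^T$; $\rho(\mathcal{T})$ is the maximum modulus of eigenvalues. *)

From HB Require Import structures.
From mathcomp Require Import all_boot all_order all_algebra.
From mathcomp Require Import complex.
Set Implicit Arguments. Unset Strict Implicit. Unset Printing Implicit Defensive.
Import Order.TTheory GRing.Theory Num.Theory.
Local Open Scope ring_scope.

Definition uniform (n k : nat) (E : {set {set 'I_n}}) : Prop :=
  forall e, e \in E -> #|e| = k.

Definition deg (n : nat) (E : {set {set 'I_n}}) (i : 'I_n) : nat :=
  #|[set e in E | i \in e]|.

(* An order-k tensor of dimension n over a ring S: we represent it as a
   function on index sequences; only sequences of length k are relevant. *)
Definition tensor (S : Type) (n : nat) := seq 'I_n -> S.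

Section Tensors.
Variable S : comPzRingType.
Variables n k : nat.

Definition adj_tensor (F : fieldType) (E : {set {set 'I_n}}) : tensor F n :=
  fun s => if (size s == k) && ([set x in s] \in E) then ((k.-1)`!%:R)^-1 else 0.

Definition deg_tensor (F : fieldType) (E : {set {set 'I_n}}) : tensor F n :=
  fun s => match s with
           | i :: t => if (size s == k) && all (fun j => j == i) t
                       then (deg E i)%:R else 0
           | [::] => 0
           end.

Definition Q_tensor (F : fieldType) (E : {set {set 'I_n}}) : tensor F n :=
  fun s => deg_tensor F E s + adj_tensor F E s.

Definition tensor_apply (T : tensor S n) (x : 'I_n -> S) (i : 'I_n) : S :=
  \sum_(t : (k.-1).-tuple 'I_n) T (i :: val t) * \prod_(j <- val t) x j.

Definition is_eigenvalue (T : tensor S n) (lambda : S) : Prop :=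
  exists x : 'I_n -> S, (exists i, x i != 0) /\
    forall i, tensor_apply T x i = lambda * x i ^+ k.-1.
End Tensors.

Definition m_val (R : fieldType) (n k : nat) (E : {set {set 'I_n}}) (i : 'I_n) : R :=
  (\sum_(e in E | i \in e) \prod_(j in e :\ i) (deg E j)%:R)
    / ((deg E i)%:R ^+ k.-1).

(* the bound max_{e in E} max_{ {i,j} ⊆ e, i<>j } (d_i+d_j+sqrt((d_i-d_j)^2+4 m_i m_j))/2;
   the maximum over the empty family is taken as 0 (all terms are >= 0). *)
Definition pair_bound (R : rcfType) (n k : nat) (E : {set {set 'I_n}}) (i j : 'I_n) : R :=
  let di : R := (deg E i)%:R in let dj : R := (deg E j)%:R in
  (di + dj + Num.sqrt ((di - dj) ^+ 2 + 4 * @m_val R n k E i * @m_val R n k E j)) / 2.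

Definition degree_bound (R : rcfType) (n k : nat) (E : {set {set 'I_n}}) : R :=
  \big[Num.max/0]_(e in E) \big[Num.max/0]_(i in e)
     \big[Num.max/0]_(j in e | i != j) @pair_bound R n k E i j.

From HB Require Import structures.
From mathcomp Require Import all_boot all_order all_algebra.
From mathcomp Require Import complex.
From mathcomp Require Import ring lra.
Import Order.TTheory GRing.Theory Num.Theory.
Local Open Scope ring_scope.
Set Implicit Arguments. Unset Strict Implicit.

(* Scale an eigenvector x by the degrees: y_j = |x_j| / d_j.  The eigen-equation
   at a vertex i gives |λ - d_i| y_i^(k-1) <= m_i Y^(k-1) whenever Y bounds y on
   the neighbours of i, since every edge through i is hit by (k-1)! index tuples,
   each of weight 1/(k-1)!.  Let p maximise y and q maximise y among the
   neighbours of p; multiplying the two inequalities at p and q gives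
   |λ - d_p| |λ - d_q| <= m_p m_q.  As |λ - d| >= |λ| - d, the modulus |λ| is then
   at most the largest root of (t - d_p)(t - d_q) = m_p m_q, which is the bound
   attached to the pair {p, q}. *)

Lemma le_half_sum_sqrt (R : rcfType) (L a b ma mb : R) :
  0 <= ma * mb -> (a <= L -> b <= L -> (L - a) * (L - b) <= ma * mb) ->
  L <= (a + b + Num.sqrt ((a - b) ^+ 2 + 4 * ma * mb)) / 2.
Proof.
move=> mm hL; set s := Num.sqrt _.
have le_s z : z ^+ 2 <= (a - b) ^+ 2 + 4 * ma * mb -> z <= s.
  by move=> hz; rewrite (le_trans (ler_norm z)) // -sqrtr_sqr ler_wsqrtr.
have m4 : 0 <= 4 * ma * mb by rewrite -mulrA mulr_ge0.
have hab : a - b <= s by apply: le_s; rewrite lerDl.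
have hba : b - a <= s by apply: le_s; rewrite -sqrrN opprB lerDl.
rewrite ler_pdivlMr ?ltr0n //.
have [La|aL] := lerP L a; first lra.
have [Lb|bL] := lerP L b; first lra.
have : 2 * L - a - b <= s.
  apply: le_s.
  have -> : (2 * L - a - b) ^+ 2 = (a - b) ^+ 2 + 4 * ((L - a) * (L - b)) by ring.
  by rewrite -mulrA lerD2l ler_pM2l ?ltr0n // hL ?ltW.
lra.
Qed.

Lemma mul_le_of_cross (F : numDomainType) (m : nat) (a b M N u v : F) :
  (0 < m)%N -> 0 <= a -> 0 <= b -> 0 <= M -> 0 <= N -> 0 < u -> 0 <= v ->
  a * u ^+ m <= M * v ^+ m -> b * v ^+ m <= N * u ^+ m -> a * b <= M * N.
Proof.
move=> m0 a0 b0 M0 N0 u0 v0 hab hba.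
have [v_eq0|v_neq0] := eqVneq v 0.
  move: hab; rewrite v_eq0 expr0n gtn_eqF // mulr0 pmulr_lle0 ?exprn_gt0 // => a_le0.
  have -> : a = 0 by apply/le_anti; rewrite a_le0 a0.
  by rewrite mul0r mulr_ge0.
have uv0 : 0 < u ^+ m * v ^+ m by rewrite mulr_gt0 ?exprn_gt0 // lt_def v_neq0.
rewrite -(ler_pM2r uv0).
have -> : a * b * (u ^+ m * v ^+ m) = a * u ^+ m * (b * v ^+ m) by ring.
have -> : M * N * (u ^+ m * v ^+ m) = M * v ^+ m * (N * u ^+ m) by ring.
by apply: ler_pM => //; rewrite mulr_ge0 ?exprn_ge0 // ltW.
Qed.

Lemma exists_argmax_nonneg (R : rcfType) (I : finType) (P : pred I) (f : I -> R[i])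
    (i0 : I) :
  P i0 -> (forall j, 0 <= f j) -> exists2 p, P p & forall j, P j -> f j <= f p.
Proof.
move=> Pi0 f0; case: (@arg_maxP _ _ _ i0 P (fun j => complex.Re (f j)) Pi0).
move=> p Pp pmax; exists p => // j Pj.
by rewrite -(RRe_real (ger0_real (f0 j))) -(RRe_real (ger0_real (f0 p))) lecR; apply: pmax.
Qed.

Lemma prod_nseq (S : comPzRingType) (I : Type) (F : I -> S) m a :
  \prod_(j <- nseq m a) F j = F a ^+ m.
Proof. by elim: m => [|m IH]; rewrite ?big_nil ?expr0 //= big_cons IH exprS. Qed.

Lemma bigmax_ge0 (R : realDomainType) (I : finType) (P : pred I) (F : I -> R) :
  0 <= \big[Num.max/0]_(i | P i) F i.
Proof. by apply: (big_rec (fun z => 0 <= z)) => // i z _ hz; rewrite le_max hz orbT. Qed.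

Lemma m_val_ge0 (F : numFieldType) n k (E : {set {set 'I_n}}) (i : 'I_n) :
  0 <= m_val F k E i.
Proof.
rewrite /m_val divr_ge0 ?exprn_ge0 ?ler0n //.
by apply: sumr_ge0 => e _; apply: prodr_ge0 => j _; rewrite ler0n.
Qed.

Lemma m_val_map (F K : fieldType) (f : {rmorphism F -> K}) n k
    (E : {set {set 'I_n}}) (i : 'I_n) :
  f (m_val F k E i) = m_val K k E i.
Proof.
rewrite /m_val fmorph_div rmorphXn rmorph_sum rmorph_nat; congr (_ / _).
by apply: eq_bigr => e _; rewrite rmorph_prod; apply: eq_bigr => j _; rewrite rmorph_nat.
Qed.

Lemma norm_le_pair_bound (R : rcfType) n k (E : {set {set 'I_n}}) (lambda : R[i])
    (p q : 'I_n) :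
  `|lambda - (deg E p)%:R| * `|lambda - (deg E q)%:R| <= m_val R[i] k E p * m_val R[i] k E q ->
  `|lambda| <= (pair_bound R k E p q)%:C%C.
Proof.
move=> key; set L := complex.Re `|lambda|.
have normE : `|lambda| = L%:C%C by rewrite /L RRe_real ?ger0_real.
have dist_ge j : (L - (deg E j)%:R)%:C%C <= `|lambda - (deg E j)%:R|.
  by rewrite rmorphB rmorph_nat /= -normE -[X in _ - X](normr_nat R[i]) lerB_dist.
rewrite normE lecR; apply: le_half_sum_sqrt; first by rewrite mulr_ge0 ?m_val_ge0.
have mE j : (m_val R k E j)%:C%C = m_val R[i] k E j by apply: (m_val_map (real_complex R)).
move=> pL qL; rewrite -lecR rmorphM rmorphM /= !mE.
by apply: le_trans key; apply: ler_pM; rewrite ?ler0c ?subr_ge0 ?dist_ge.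
Qed.

Section UniformHypergraph.
Variables (R : rcfType) (n k : nat) (E : {set {set 'I_n}}).
Hypothesis k_ge2 : (2 <= k)%N.
Hypothesis E_uniform : uniform k E.
Local Notation C := R[i].

Definition adjacent (p j : 'I_n) : bool := [exists e in E, (p \in e) && (j \in e :\ p)].

Lemma cards_edgeD1 (e : {set 'I_n}) (i : 'I_n) : e \in E -> i \in e -> #|e :\ i| = k.-1.
Proof. by move=> he hi; have := cardsD1 i e; rewrite hi (E_uniform he) add1n => ->. Qed.

Lemma size_cons_tuple (i : 'I_n) (t : (k.-1).-tuple 'I_n) : size (i :: val t) = k.
Proof. by rewrite /= size_tuple prednK //; case: k k_ge2. Qed.

Lemma edge_seq_uniq (i : 'I_n) (t : (k.-1).-tuple 'I_n) :
  [set x in i :: val t] \in E -> uniq (i :: val t).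
Proof. by move=> hs; apply/card_uniqP; rewrite -cardsE (E_uniform hs) size_cons_tuple. Qed.

Lemma prod_edge_seq (F : 'I_n -> C) (i : 'I_n) (t : (k.-1).-tuple 'I_n) :
  [set x in i :: val t] \in E ->
  \prod_(j <- val t) F j = \prod_(j in [set x in i :: val t] :\ i) F j.
Proof.
move=> hs; have /= /andP [nin ut] := edge_seq_uniq hs.
rewrite big_uniq //; apply: eq_bigl => j; rewrite !inE.
by case: (eqVneq j i) => [->|] //=; rewrite (negbTE nin).
Qed.

Lemma card_tuples_of_edge (i : 'I_n) (e : {set 'I_n}) :
  e \in E -> i \in e ->
  (#|[pred t : (k.-1).-tuple 'I_n | [set x in i :: val t] == e]| <= (k.-1)`!)%N.
Proof.
move=> he hi.
have sub : [pred t : (k.-1).-tuple 'I_n | [set x in i :: val t] == e] \subset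
   [set t : (k.-1).-tuple 'I_n | all (mem (e :\ i)) t & uniq t].
  apply/subsetP => t; rewrite !inE => /eqP hs.
  have /= /andP [nin ->] := edge_seq_uniq (etrans (congr1 (fun z => z \in E) hs) he).
  rewrite andbT; apply/allP => j jt; rewrite inE -hs !inE jt orbT andbT.
  by apply: contraNneq nin => <-.
apply: leq_trans (subset_leq_card sub) _.
by rewrite card_uniq_tuples (cards_edgeD1 he hi) ffactnn.
Qed.

Lemma sum_deg_tensor (i : 'I_n) (x : 'I_n -> C) :
  \sum_(t : (k.-1).-tuple 'I_n) deg_tensor k C E (i :: val t) * \prod_(j <- val t) x j
  = (deg E i)%:R * x i ^+ k.-1.
Proof.
rewrite (bigD1 [tuple of nseq k.-1 i]) //= [X in _ + X]big1 ?addr0.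
  rewrite prod_nseq /deg_tensor.
  have -> : size (i :: val [tuple of nseq k.-1 i]) == k by rewrite size_cons_tuple.
  by have -> : all (fun j => j == i) (val [tuple of nseq k.-1 i])
    by apply/all_pred1P; rewrite /= size_nseq.
move=> t /eqP t_neq; rewrite /deg_tensor.
case: ifP => [/andP [_ /all_pred1P t_nseq]|_]; last by rewrite mul0r.
by case: t_neq; apply: val_inj; rewrite /= t_nseq size_tuple.
Qed.

Lemma norm_sum_adj_tensor_le (i : 'I_n) (x : 'I_n -> C) :
  `|\sum_(t : (k.-1).-tuple 'I_n) adj_tensor k C E (i :: val t) * \prod_(j <- val t) x j|
   <= \sum_(e in E | i \in e) \prod_(j in e :\ i) `|x j|.
Proof.
apply: le_trans (ler_norm_sum _ _ _) _.
set c := ((k.-1)`!%:R : C)^-1.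
have c0 : 0 <= c by rewrite invr_ge0 ler0n.
have by_edge (t : (k.-1).-tuple 'I_n) :
   `|adj_tensor k C E (i :: val t) * \prod_(j <- val t) x j| =
   \sum_(e in E | i \in e)
     (if [set x in i :: val t] == e then c * \prod_(j in e :\ i) `|x j| else 0).
  rewrite normrM normr_prod /adj_tensor size_cons_tuple eqxx /=.
  case: ifP => hin.
    rewrite (bigD1 [set x in i :: val t]) /=; last by rewrite hin !inE eqxx.
    rewrite eqxx [X in _ + X]big1 ?addr0; last first.
      by move=> e /andP [_ ne]; rewrite eq_sym (negbTE ne).
    by rewrite ger0_norm // (prod_edge_seq _ hin).
  rewrite normr0 mul0r; apply/esym/big1 => e /andP [he _].
  by case: eqP => // t_e; rewrite -t_e hin in he.
rewrite (eq_bigr _ (fun t _ => by_edge t)) exchange_big /=.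
apply: ler_sum => e /andP [he hi].
rewrite -big_mkcond sumr_const -mulrnAl.
apply: ler_piMl; first by apply: prodr_ge0 => j _; exact: normr_ge0.
rewrite -mulr_natl ler_pdivrMr ?ltr0n ?fact_gt0 // mul1r ler_nat.
exact: card_tuples_of_edge.
Qed.

Lemma adjacent_deg_gt0 (p q : 'I_n) : adjacent p q -> (0 < deg E q)%N.
Proof.
case/existsP=> e /and3P [he _]; rewrite inE => /andP [_ hq].
by rewrite card_gt0; apply/set0Pn; exists e; rewrite inE he hq.
Qed.

Lemma exists_adjacent (p : 'I_n) : (0 < deg E p)%N -> exists j, adjacent p j.
Proof.
rewrite card_gt0 => /set0Pn [e]; rewrite inE => /andP [he hp].
have : e :\ p != set0 by rewrite -card_gt0 (cards_edgeD1 he hp) -subn1 subn_gt0.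
by case/set0Pn => j hj; exists j; apply/existsP; exists e; rewrite he hp.
Qed.

Lemma pair_le_degree_bound (p q : 'I_n) :
  adjacent p q -> pair_bound R k E p q <= degree_bound R k E.
Proof.
case/existsP=> e /and3P [he hp]; rewrite !inE => /andP [qp hq].
apply: le_trans (le_bigmax_cond _ _ he).
apply: le_trans (le_bigmax_cond _ _ hp).
have hc : (q \in e) && (p != q) by rewrite hq eq_sym qp.
exact: (le_bigmax_cond _ (fun j => pair_bound R k E p j) hc).
Qed.

Section Eigenvector.
Variables (lambda : C) (x : 'I_n -> C).
Hypothesis x_eigen : forall i, tensor_apply k (Q_tensor k C E) x i = lambda * x i ^+ k.-1.
Hypothesis lambda_neq0 : lambda != 0.

Lemma eigen_row_ineq (i : 'I_n) :
  `|lambda - (deg E i)%:R| * `|x i| ^+ k.-1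
    <= \sum_(e in E | i \in e) \prod_(j in e :\ i) `|x j|.
Proof.
have h := x_eigen i; rewrite /tensor_apply /Q_tensor in h.
rewrite (eq_bigr _ (fun t _ => mulrDl _ _ _)) big_split /= sum_deg_tensor in h.
rewrite -normrX -normrM mulrBl -h addrC addrK.
exact: norm_sum_adj_tensor_le.
Qed.

Lemma eigvec_deg0 (j : 'I_n) : deg E j = 0%N -> x j = 0.
Proof.
move=> dj0; have := eigen_row_ineq j.
rewrite dj0 subr0 big_pred0; last first.
  move=> e; apply/negP => /andP [he hje].
  have : e \in [set e in E | j \in e] by rewrite inE he hje.
  by rewrite (cards0_eq dj0) inE.
rewrite pmulr_rle0 ?normr_gt0 // => xj_le0.
have : `|x j| ^+ k.-1 == 0 by rewrite eq_le xj_le0 exprn_ge0.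
by rewrite expf_eq0 normr_eq0 => /andP [_ /eqP].
Qed.

Let y (j : 'I_n) : C := `|x j| / (deg E j)%:R.

Let y_ge0 (j : 'I_n) : 0 <= y j.
Proof. by rewrite divr_ge0 ?ler0n. Qed.

Let norm_eigvec (j : 'I_n) : `|x j| = (deg E j)%:R * y j.
Proof.
have [dj0|dj_gt0] := posnP (deg E j); first by rewrite /y (eigvec_deg0 dj0) normr0 !mul0r mulr0.
by rewrite /y mulrC divfK // pnatr_eq0 -lt0n.
Qed.

Let scaled_row_ineq (i : 'I_n) (Y : C) :
  (0 < deg E i)%N -> (forall j, adjacent i j -> y j <= Y) ->
  `|lambda - (deg E i)%:R| * y i ^+ k.-1 <= m_val C k E i * Y ^+ k.-1.
Proof.
move=> di_gt0 yY.
have dX_gt0 : 0 < ((deg E i)%:R : C) ^+ k.-1 by rewrite exprn_gt0 // ltr0n.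
have row := eigen_row_ineq i; rewrite norm_eigvec exprMn in row.
rewrite -(ler_pM2r dX_gt0) -mulrA (mulrC (y i ^+ _)).
apply: le_trans row _.
rewrite /m_val mulrAC divfK ?gt_eqF // big_distrl /=.
apply: ler_sum => e /andP [he hi].
rewrite (eq_bigr _ (fun j _ => norm_eigvec j)) big_split /=.
apply: ler_wpM2l; first by apply: prodr_ge0 => j _; rewrite ler0n.
rewrite -(cards_edgeD1 he hi) -prodr_const.
apply: ler_prod => j hj; rewrite y_ge0 yY //.
by apply/existsP; exists e; rewrite he hi.
Qed.

Lemma eigen_adjacent_pair_ineq (i0 : 'I_n) : x i0 != 0 ->
  exists p q, adjacent p q /\
    `|lambda - (deg E p)%:R| * `|lambda - (deg E q)%:R| <= m_val C k E p * m_val C k E q.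
Proof.
move=> xi0_neq0.
have deg_gt0 j : 0 < y j -> (0 < deg E j)%N.
  by rewrite lt0n; apply: contraTneq => dj0; rewrite /y dj0 invr0 mulr0 ltxx.
have di0_gt0 : (0 < deg E i0)%N.
  by rewrite lt0n; apply: contra_neq xi0_neq0 => /eigvec_deg0.
have [p _ pmax] := @exists_argmax_nonneg _ _ predT y i0 isT y_ge0.
have yp_gt0 : 0 < y p.
  by apply: lt_le_trans (pmax i0 isT); rewrite divr_gt0 ?normr_gt0 ?ltr0n.
have dp_gt0 := deg_gt0 p yp_gt0.
have [j0 pj0] := exists_adjacent dp_gt0.
have [q pq qmax] := exists_argmax_nonneg pj0 y_ge0.
exists p, q; split=> //.
apply: (@mul_le_of_cross _ k.-1 _ _ _ _ (y p) (y q)); rewrite ?normr_ge0 ?m_val_ge0 //.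
- by case: k k_ge2 => [|[|]].
- exact: scaled_row_ineq.
- by apply: scaled_row_ineq (adjacent_deg_gt0 pq) _ => j _; exact: pmax.
Qed.

End Eigenvector.
End UniformHypergraph.

Theorem corollary2p3 (R : rcfType) (n k : nat) (E : {set {set 'I_n}}) :
  (2 <= k)%N -> uniform k E ->
  forall lambda : R[i], is_eigenvalue k (Q_tensor k R[i] E) lambda ->
    `|lambda| <= (degree_bound R k E)%:C%C.
Proof.
move=> k_ge2 E_uniform lambda [x [[i0 xi0_neq0] x_eigen]].
have [->|lambda_neq0] := eqVneq lambda 0; first by rewrite normr0 ler0c bigmax_ge0.
have [p [q [pq pair_ineq]]] :=
  eigen_adjacent_pair_ineq k_ge2 E_uniform x_eigen lambda_neq0 xi0_neq0.
apply: le_trans (norm_le_pair_bound pair_ineq) _.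
by rewrite lecR pair_le_degree_bound.
Qed.
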